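(* Let $\{\phi_i\}_{i=1}^n$ be a geometrically uniform frame for $\mathbb{C}^m$ with frame operator $S=\sum_i\phi_i\phi_i^*$, and let $\mu_i=S^{-1/2}\phi_i$ be its canonical tight frame vectors. Then for every collection $\mu'_1,\dots,\mu'_n\in\mathbb{C}^m$ forming a normalized tight frame (i.e. $\sum_{i=1}^n\mu'_i\mu_i'^*=I_m$), $$\sum_{i=1}^n|\langle\phi_i,\mu'_i\rangle|^2\le\sum_{i=1}^n|\langle\phi_i,\mu_i\rangle|^2 .$$
   Context: Inner product $\langle x,y\rangle=x^*y$. A geometrically uniform (GU) frame is a set $\{\phi_i=U_i\phi\}_{i=1}^n$ spanning $\mathbb{C}^m$, where $\{U_1,\dots,U_n\}$ is an abelian group of $n$ distinct unitary $m\times m$ matrices. $S^{-1/2}$ is the positive definite square root of $S^{-1}$. A normalized tight frame is a set of vectors whose frame operator equals the identity. *)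

From HB Require Import structures.
From mathcomp Require Import all_boot all_order all_algebra.
Set Implicit Arguments. Unset Strict Implicit. Unset Printing Implicit Defensive.
Import Order.TTheory GRing.Theory Num.Theory.
Local Open Scope ring_scope.

Definition adjmx (C : numClosedFieldType) m n (A : 'M[C]_(m, n)) : 'M[C]_(n, m) :=
  map_mx (@Num.conj C) (trmx A).

Definition inprod (C : numClosedFieldType) m (x y : 'cV[C]_m) : C :=
  (adjmx x *m y) 0 0.

Definition posdefmx (C : numClosedFieldType) m (A : 'M[C]_m) : Prop :=
  adjmx A = A /\ forall v : 'cV[C]_m, v != 0 -> 0 < inprod v (A *m v).

Definition abelian_unitary_group (C : numClosedFieldType) m n
    (U : 'I_n -> 'M[C]_m) : Prop :=
  [/\ injective U,
      forall i, U i *m adjmx (U i) = 1%:M,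
      exists i, U i = 1%:M
    & [/\ forall i j, exists k, U i *m U j = U k,
      forall i, exists k, U k = invmx (U i)
    & forall i j, U i *m U j = U j *m U i]].

Definition spans (C : numClosedFieldType) m n (phi : 'I_n -> 'cV[C]_m) : Prop :=
  row_full (\matrix_(i < n) (phi i)^T).

Definition frame_op (C : numClosedFieldType) m n (phi : 'I_n -> 'cV[C]_m) : 'M[C]_m :=
  \sum_(i < n) phi i *m adjmx (phi i).

From HB Require Import structures.
From mathcomp Require Import all_boot all_order all_algebra.
From mathcomp Require Import ring.
Import Order.TTheory GRing.Theory Num.Theory.
Set Implicit Arguments. Unset Strict Implicit.
Local Open Scope ring_scope.

(* Since S commutes with every U_i (the group permutes the frame vectors) and the positive
   definite square root is unique, T = S^{-1/2} commutes with every U_i too; hence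
   <phi_i, T phi_i> = c is constant.  The inverse W = T^{-1} = T S is positive definite with
   trace sum_i <phi_i, T phi_i> = n c.  Cauchy-Schwarz for the form <., W .> gives
   |<phi_i, mu'_i>|^2 = |<T phi_i, W mu'_i>|^2 <= c <mu'_i, W mu'_i>, and summing, with
   sum_i mu'_i mu'_i^* = I, bounds the left side by c tr W = n c^2, the right side. *)

Section Adjoint.
Variable C : numClosedFieldType.

Lemma adjmxK m n (A : 'M[C]_(m, n)) : adjmx (adjmx A) = A.
Proof. by apply/matrixP=> i j; rewrite !mxE conjCK. Qed.

Lemma adjmxM m n p (A : 'M[C]_(m, n)) (B : 'M[C]_(n, p)) :
  adjmx (A *m B) = adjmx B *m adjmx A.
Proof. by rewrite /adjmx trmx_mul map_mxM. Qed.

Lemma adjmxD m n (A B : 'M[C]_(m, n)) : adjmx (A + B) = adjmx A + adjmx B.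
Proof. by apply/matrixP=> i j; rewrite !mxE rmorphD. Qed.

Lemma adjmxN m n (A : 'M[C]_(m, n)) : adjmx (- A) = - adjmx A.
Proof. by apply/matrixP=> i j; rewrite !mxE rmorphN. Qed.

Lemma adjmxZ m n (a : C) (A : 'M[C]_(m, n)) : adjmx (a *: A) = a^* *: adjmx A.
Proof. by apply/matrixP=> i j; rewrite !mxE rmorphM. Qed.

Lemma adjmxV n (A : 'M[C]_n) : adjmx (invmx A) = invmx (adjmx A).
Proof. by rewrite /adjmx trmx_inv map_invmx. Qed.

Lemma inprod_conj m (x y : 'cV[C]_m) : inprod y x = (inprod x y)^*.
Proof.
rewrite /inprod !mxE rmorph_sum; apply: eq_bigr => k _.
by rewrite !mxE rmorphM /= conjCK mulrC.
Qed.

Lemma inprod_adjmx m (A : 'M[C]_m) (x y : 'cV[C]_m) :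
  inprod x (A *m y) = inprod (adjmx A *m x) y.
Proof. by rewrite /inprod adjmxM adjmxK mulmxA. Qed.

Lemma inprodDl m (x y z : 'cV[C]_m) : inprod (y + z) x = inprod y x + inprod z x.
Proof. by rewrite /inprod adjmxD mulmxDl mxE. Qed.

Lemma inprodDr m (x y z : 'cV[C]_m) : inprod x (y + z) = inprod x y + inprod x z.
Proof. by rewrite /inprod mulmxDr mxE. Qed.

Lemma inprodNl m (x y : 'cV[C]_m) : inprod (- x) y = - inprod x y.
Proof. by rewrite /inprod adjmxN mulNmx mxE. Qed.

Lemma inprodNr m (x y : 'cV[C]_m) : inprod x (- y) = - inprod x y.
Proof. by rewrite /inprod mulmxN mxE. Qed.

Lemma inprodZl m a (x y : 'cV[C]_m) : inprod (a *: x) y = a^* * inprod x y.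
Proof. by rewrite /inprod adjmxZ -scalemxAl mxE. Qed.

Lemma inprodZr m a (x y : 'cV[C]_m) : inprod x (a *: y) = a * inprod x y.
Proof. by rewrite /inprod -scalemxAr mxE. Qed.

Lemma inprod0l m (y : 'cV[C]_m) : inprod 0 y = 0.
Proof. by rewrite /inprod (_ : adjmx 0 = 0) ?mul0mx ?mxE //; apply/matrixP=> i j; rewrite !mxE rmorph0. Qed.

Lemma inprod0r m (x : 'cV[C]_m) : inprod x 0 = 0.
Proof. by rewrite /inprod mulmx0 mxE. Qed.

Lemma mxtrace_mul_frame_op m n (A : 'M[C]_m) (v : 'I_n -> 'cV[C]_m) :
  \tr (A *m frame_op v) = \sum_i inprod (v i) (A *m v i).
Proof.
rewrite /frame_op mulmx_sumr raddf_sum /=; apply: eq_bigr => i _.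
by rewrite mulmxA mxtrace_mulC /mxtrace big_ord1.
Qed.

Lemma frame_op_col m n (D : 'M[C]_(m, n)) : frame_op (fun j => col j D) = D *m adjmx D.
Proof.
apply/matrixP=> a b; rewrite /frame_op summxE !mxE; apply: eq_bigr => j _.
by rewrite !mxE big_ord1 !mxE.
Qed.

Lemma mxtrace_adjmx_conj m n (A : 'M[C]_m) (D : 'M[C]_(m, n)) :
  \tr (adjmx D *m A *m D) = \sum_j inprod (col j D) (A *m col j D).
Proof. by rewrite mxtrace_mulC mulmxA -frame_op_col mxtrace_mulC mxtrace_mul_frame_op. Qed.

Lemma posdefmx_ge0 m (A : 'M[C]_m) v : posdefmx A -> 0 <= inprod v (A *m v).
Proof.
case=> _ hA; have [->|nz] := eqVneq v 0; first by rewrite mulmx0 inprod0r.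
exact: ltW (hA _ nz).
Qed.

Lemma posdefmx_inprod_eq0 m (A : 'M[C]_m) v :
  posdefmx A -> inprod v (A *m v) = 0 -> v = 0.
Proof. by case=> _ hA h; apply/eqP/negP => /negP/hA; rewrite h ltxx. Qed.

Lemma posdefmx_unit m (A : 'M[C]_m) : posdefmx A -> A \in unitmx.
Proof.
move=> hA; rewrite unitmxE unitfE -det_tr; apply/negP => /det0P [v vnz hv].
have Av : A *m v^T = 0 by rewrite -[A]trmxK -trmx_mul hv trmx0.
have /eqP := posdefmx_inprod_eq0 hA (etrans (congr1 _ Av) (inprod0r _)).
by rewrite -trmx0 (inj_eq trmx_inj) (negbTE vnz).
Qed.

Lemma posdefmx_inv m (A : 'M[C]_m) : posdefmx A -> posdefmx (invmx A).
Proof.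
move=> hA; have Au := posdefmx_unit hA.
split; first by rewrite adjmxV hA.1.
move=> v nz; set w := invmx A *m v.
have vE : v = A *m w by rewrite /w mulmxA mulmxV // mul1mx.
rewrite {1}vE -{1}hA.1 -inprod_adjmx; apply: hA.2.
by apply: contraNneq nz => w0; rewrite vE w0 mulmx0.
Qed.

(* If P^2 = Q^2 then D = P - Q satisfies P D + D Q = 0, so tr(D P D) + tr(D Q D) = 0;
   both traces are sums of nonnegative terms over the columns of D. *)
Lemma posdefmx_sqrt_inj m (P Q : 'M[C]_m) :
  posdefmx P -> posdefmx Q -> P *m P = Q *m Q -> P = Q.
Proof.
move=> hP hQ PQ; set D := P - Q.
have hD : adjmx D = D by rewrite /D adjmxD adjmxN hP.1 hQ.1.
have anti : P *m D + D *m Q = 0 by rewrite /D mulmxBr mulmxBl PQ addrA subrK subrr.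
have tr0 : \tr (adjmx D *m P *m D) + \tr (adjmx D *m Q *m D) = 0.
  rewrite hD [\tr (D *m Q *m D)]mxtrace_mulC -mulmxA -raddfD /=.
  by rewrite -mulmxDr anti mulmx0 linear0.
rewrite !mxtrace_adjmx_conj -big_split /= in tr0.
have col0 j : col j D = 0.
  have ge0 k : 0 <= inprod (col k D) (P *m col k D) + inprod (col k D) (Q *m col k D).
    by rewrite addr_ge0 ?posdefmx_ge0.
  move/eqP: (psumr_eq0P (fun k _ => ge0 k) tr0 (i:=j) isT).
  by rewrite paddr_eq0 ?posdefmx_ge0 // => /andP[/eqP/(posdefmx_inprod_eq0 hP)].
apply/eqP; rewrite -subr_eq0; apply/eqP/matrixP => i j.
by have := congr1 (fun M : 'cV[C]_m => M i 0) (col0 j); rewrite !mxE.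
Qed.

(* Expand 0 <= <w, W w> with w = c y - a x, where c = <x, W x> and a = <x, W y>. *)
Lemma cauchy_schwarz_posdefmx m (W : 'M[C]_m) (x y : 'cV[C]_m) :
  posdefmx W ->
  `|inprod x (W *m y)| ^+ 2 <= inprod x (W *m x) * inprod y (W *m y).
Proof.
move=> hW; have [->|nz] := eqVneq x 0.
  by rewrite !inprod0l mul0r normr0 expr0n.
set c := inprod x (W *m x); set a := inprod x (W *m y); set d := inprod y (W *m y).
have c_gt0 : 0 < c := hW.2 _ nz.
have a_conj : inprod y (W *m x) = a^* by rewrite inprod_adjmx hW.1 inprod_conj.
have c_conj : c^* = c by rewrite geC0_conj // ltW.
have := posdefmx_ge0 (c *: y - a *: x) hW.
rewrite mulmxBr -!scalemxAr inprodDl inprodNl !inprodZl !inprodDr !inprodNr !inprodZr.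
rewrite -/c -/d a_conj -/a c_conj normCK.
have -> : c * (c * d - a * a^*) - a^* * (c * a - a * c) = c * (c * d - a * a^*) by ring.
by rewrite pmulr_rge0 // subr_ge0.
Qed.

Lemma posdefmx_unitary_conj m (A V : 'M[C]_m) :
  posdefmx A -> V *m adjmx V = 1%:M -> posdefmx (adjmx V *m A *m V).
Proof.
move=> hA VV; split; first by rewrite !adjmxM adjmxK hA.1 mulmxA.
move=> v nz; rewrite -!mulmxA inprod_adjmx adjmxK; apply: hA.2.
apply: contraNneq nz => e.
by rewrite -[v]mul1mx -(mulmx1C VV) -mulmxA e mulmx0.
Qed.

Lemma comm_mx_invmx m (V A : 'M[C]_m) :
  A \in unitmx -> comm_mx V A -> comm_mx V (invmx A).
Proof.
move=> Au VA; rewrite /comm_mx.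
rewrite -[V *m _]mul1mx -(mulVmx Au) -!mulmxA [A *m (V *m _)]mulmxA -VA.
by rewrite -mulmxA mulmxV // mulmx1.
Qed.

(* V^* T V is again a positive definite square root of T *m T, hence equals T. *)
Lemma posdefmx_sqrt_comm m (T V : 'M[C]_m) :
  posdefmx T -> V *m adjmx V = 1%:M -> comm_mx V (T *m T) -> comm_mx V T.
Proof.
move=> hT VV VTT; have VV' := mulmx1C VV.
have T_conj : T = adjmx V *m T *m V.
  apply: posdefmx_sqrt_inj (posdefmx_unitary_conj hT VV) _ => //.
  rewrite !mulmxA -[_ *m V *m adjmx V]mulmxA VV mulmx1 -[_ *m T *m T]mulmxA.
  by rewrite -mulmxA -VTT mulmxA VV' mul1mx.
by rewrite /comm_mx {1}T_conj !mulmxA VV mul1mx.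
Qed.

Lemma frame_op_unitary_reindex m n (V : 'M[C]_m) (v : 'I_n -> 'cV[C]_m)
    (h : 'I_n -> 'I_n) :
  injective h -> (forall i, V *m v i = v (h i)) ->
  V *m frame_op v *m adjmx V = frame_op v.
Proof.
move=> h_inj Vv; rewrite /frame_op mulmx_sumr mulmx_suml [RHS](reindex_inj h_inj).
by apply: eq_bigr => i _; rewrite -Vv adjmxM !mulmxA.
Qed.

End Adjoint.

(* Left multiplication by U j permutes the orbit {U i phi0}, so it fixes S by conjugation. *)
Lemma comm_mx_frame_op_orbit (C : numClosedFieldType) m n (U : 'I_n -> 'M[C]_m)
    (phi0 : 'cV[C]_m) j :
  abelian_unitary_group U -> comm_mx (U j) (frame_op (fun i => U i *m phi0)).
Proof.
case=> U_inj U_unitary _ [U_mul _ _]; set S := frame_op _.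
have UU' i : adjmx (U i) *m U i = 1%:M by apply: mulmx1C.
pose h i := odflt i [pick k | U j *m U i == U k].
have hP i : U j *m U i = U (h i).
  rewrite /h; case: pickP => [k /eqP //|/= none].
  by have [k hk] := U_mul j i; move: (none k); rewrite hk eqxx.
have h_inj : injective h.
  move=> i1 i2 e; apply: U_inj.
  by rewrite -[U i1]mul1mx -(UU' j) -mulmxA hP e -hP mulmxA UU' mul1mx.
have S_conj : U j *m S *m adjmx (U j) = S.
  by apply: frame_op_unitary_reindex h_inj _ => i; rewrite mulmxA hP.
by rewrite /comm_mx -{2}S_conj -!mulmxA UU' mulmx1.
Qed.

Theorem mainTheorem6 (C : numClosedFieldType) (m n : nat)
    (U : 'I_n -> 'M[C]_m) (phi0 : 'cV[C]_m) (T : 'M[C]_m)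
    (mu' : 'I_n -> 'cV[C]_m) :
  abelian_unitary_group U ->
  spans (fun i => U i *m phi0) ->
  posdefmx T -> T *m T = invmx (frame_op (fun i => U i *m phi0)) ->
  frame_op mu' = 1%:M ->
  \sum_(i < n) `|inprod (U i *m phi0) (mu' i)| ^+ 2
    <= \sum_(i < n) `|inprod (U i *m phi0) (T *m (U i *m phi0))| ^+ 2.
Proof.
move=> hU _ hT TT tight; set S := frame_op _ in TT.
have U_unitary i : U i *m adjmx (U i) = 1%:M by case: hU.
have T_unit := posdefmx_unit hT.
have S_unit : S \in unitmx by rewrite -unitmx_inv -TT unitmx_mul T_unit.
have TU i : comm_mx (U i) T.
  apply: posdefmx_sqrt_comm hT (U_unitary i) _; rewrite TT.
  exact: comm_mx_invmx S_unit (comm_mx_frame_op_orbit phi0 i hU).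
have T_sym x y : inprod (T *m x) y = inprod x (T *m y) by rewrite inprod_adjmx hT.1.
set c := inprod phi0 (T *m phi0); have c_ge0 : 0 <= c := posdefmx_ge0 _ hT.
have diag i : inprod (U i *m phi0) (T *m (U i *m phi0)) = c.
  by rewrite mulmxA -TU -mulmxA inprod_adjmx mulmxA (mulmx1C (U_unitary i)) mul1mx.
set W := invmx T; have hW := posdefmx_inv hT.
have TW : T *m W = 1%:M by apply: mulmxV.
have trW : \tr W = c *+ n.
  have -> : W = T *m S.
    by rewrite -[W]mulmx1 -(mulVmx S_unit) -TT !mulmxA mulVmx // mul1mx.
  by rewrite mxtrace_mul_frame_op (eq_bigr _ (fun i _ => diag i)) sumr_const card_ord.
have bound i : `|inprod (U i *m phi0) (mu' i)| ^+ 2 <= c * inprod (mu' i) (W *m mu' i).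
  have := cauchy_schwarz_posdefmx (T *m (U i *m phi0)) (mu' i) hW.
  by rewrite !T_sym !mulmxA TW !mul1mx -mulmxA diag.
apply: le_trans (ler_sum _ (fun i _ => bound i)) _.
rewrite -mulr_sumr -mxtrace_mul_frame_op tight mulmx1 trW.
under [X in _ <= X]eq_bigr do rewrite diag.
by rewrite sumr_const card_ord ger0_norm // mulrnAr.
Qed.
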